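(* Let $a_2 = i$, $a_0 = \frac{1-i}{2}$, or $a_2=-i$, $a_0=\frac{1+i}{2}$. Then the second-order recursion $$z_n = \frac{a_2 z_{n-2} + z_{n-1} + a_0}{z_{n-2}},$$ that is, $$z_n = \frac{2i\, z_{n-2} + 2 z_{n-1} + (1-i)}{2 z_{n-2}} \quad\text{or}\quad z_n = \frac{-2i\, z_{n-2} + 2 z_{n-1} + (1+i)}{2 z_{n-2}},$$ is periodic with period $8$: for the sequence defined from indeterminates $z_1,z_2$ one has $z_9 = z_1$ and $z_{10} = z_2$ in $\mathbb{C}(z_1,z_2)$, hence $z_{n+8}=z_n$ for all $n\ge 1$.
   Context: Let $z_1,z_2$ be independent indeterminates over $\mathbb{C}$, and define $z_n \in \mathbb{C}(z_1,z_2)$ for $n\ge 3$ by the given recursion. A second-order recursion is said to be periodic with period $k$ if all iterates $z_3,z_4,\dots$ are well-defined elements of $\mathbb{C}(z_1,z_2)$ (no denominator is identically zero) and $z_{k+1}=z_1$, $z_{k+2}=z_2$; equivalently, every complex sequence satisfying the recursion for which no denominator vanishes satisfies $z_{n+k}=z_n$ for all $n$. *)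

From HB Require Import structures.
From mathcomp Require Import all_boot all_order all_algebra.
From mathcomp Require Import complex fraction.
Set Implicit Arguments. Unset Strict Implicit. Unset Printing Implicit Defensive.
Import Order.TTheory GRing.Theory Num.Theory.
Local Open Scope ring_scope.
Local Open Scope quotient_scope.

Definition ratfun2 (R : rcfType) := {fraction {poly {poly R[i]}}}.

(* The two indeterminates: z1 is the inner variable, z2 the outer one. *)
Definition ind_z1 (R : rcfType) : ratfun2 R := tofrac (('X : {poly R[i]})%:P).
Definition ind_z2 (R : rcfType) : ratfun2 R := tofrac ('X : {poly {poly R[i]}}).
Definition constF (R : rcfType) (c : R[i]) : ratfun2 R := tofrac ((c%:P)%:P).

(* Pairs (z_{n+1}, z_{n+2}) of the recursion
   z_n = (a2 z_{n-2} + z_{n-1} + a0) / z_{n-2}  over a field F. *)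
Fixpoint rec_pair (F : fieldType) (a2 a0 x1 x2 : F) (n : nat) : F * F :=
  match n with
  | 0 => (x1, x2)
  | n'.+1 => let p := rec_pair a2 a0 x1 x2 n' in
             (p.2, (a2 * p.1 + p.2 + a0) / p.1)
  end.

(* z_n for n >= 1 (1-based indexing, z_1 = x1, z_2 = x2). *)
Definition rec_seq (F : fieldType) (a2 a0 x1 x2 : F) (n : nat) : F :=
  (rec_pair a2 a0 x1 x2 n.-1).1.

(* Periodicity with period k in the sense of the paper: all iterates are
   well defined (no denominator z_{n}, n >= 1, is zero) and z_{k+1} = z_1,
   z_{k+2} = z_2. *)
Definition periodic_rec (F : fieldType) (a2 a0 x1 x2 : F) (k : nat) : Prop :=
  (forall n, (1 <= n)%N -> rec_seq a2 a0 x1 x2 n != 0) /\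
  rec_seq a2 a0 x1 x2 k.+1 = rec_seq a2 a0 x1 x2 1 /\
  rec_seq a2 a0 x1 x2 k.+2 = rec_seq a2 a0 x1 x2 2.

From HB Require Import structures.
From mathcomp Require Import all_boot all_order all_algebra.
From mathcomp Require Import complex fraction.
From mathcomp Require Import ring.
Set Implicit Arguments. Unset Strict Implicit. Unset Printing Implicit Defensive.
Import GRing.Theory Num.Theory.
Local Open Scope ring_scope.

(* Both values of a2 satisfy a2^2 = -1, and then z_9 = z_1, z_10 = z_2 is an
   identity of rational functions in a2, z1, z2, which [field] verifies once
   its denominators are known to be nonzero polynomials; each of them is
   nonzero because it does not vanish at (a2, z1, z2) = (i, 3, 5), a
   computation in Z[i].  No iterate vanishes because the recursion has a
   nonzero fixed point w: the specialization z1 = z2 = w is defined on every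
   iterate and sends it to w. *)

Section Recursion.
Variables (F : fieldType) (a b : F).

Lemma rec_pair_addn x y m n :
  rec_pair a b x y (m + n) =
  rec_pair a b (rec_pair a b x y m).1 (rec_pair a b x y m).2 n.
Proof.
elim: n => [|n IHn]; first by rewrite addn0; case: (rec_pair a b x y m).
by rewrite addnS /= IHn.
Qed.

Lemma rec_seq_periodic x y k :
  rec_pair a b x y k = (x, y) ->
  forall n, (1 <= n)%N -> rec_seq a b x y (n + k) = rec_seq a b x y n.
Proof.
by move=> Pk [//|n] _; rewrite /rec_seq addSn /= addnC rec_pair_addn Pk.
Qed.

End Recursion.

Section Specialization.
Variables (D : idomainType) (K : fieldType) (phi : {rmorphism D -> K}).

Definition frac_value (f : {fraction D}) (v : K) :=
  exists p q : D, [/\ phi q != 0, f = tofrac p / tofrac q & phi p = v * phi q].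

Lemma tofrac_neq0 q : phi q != 0 -> tofrac q != 0.
Proof.
by apply: contraNneq => /eqP; rewrite tofrac_eq0 => /eqP ->; rewrite rmorph0.
Qed.

Lemma frac_value_tofrac p : frac_value (tofrac p) (phi p).
Proof.
by exists p, 1; split; rewrite ?rmorph1 ?oner_neq0 ?tofrac1 ?divr1 ?mulr1.
Qed.

Lemma frac_value_neq0 f v : frac_value f v -> v != 0 -> f != 0.
Proof.
case=> p [q] [q0 -> pq] v0.
by rewrite mulf_neq0 ?invr_eq0 ?tofrac_neq0 // pq mulf_neq0.
Qed.

Lemma frac_valueD f g u v :
  frac_value f u -> frac_value g v -> frac_value (f + g) (u + v).
Proof.
case=> p1 [q1] [q10 -> e1] [p2 [q2] [q20 -> e2]].
exists (p1 * q2 + p2 * q1), (q1 * q2); split.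
- by rewrite rmorphM mulf_neq0.
- by rewrite addf_div ?tofrac_neq0 // tofracD !tofracM.
- by rewrite rmorphD !rmorphM e1 e2; ring.
Qed.

Lemma frac_valueM f g u v :
  frac_value f u -> frac_value g v -> frac_value (f * g) (u * v).
Proof.
case=> p1 [q1] [q10 -> e1] [p2 [q2] [q20 -> e2]].
exists (p1 * p2), (q1 * q2); split.
- by rewrite rmorphM mulf_neq0.
- by rewrite mulf_div !tofracM.
- by rewrite !rmorphM e1 e2; ring.
Qed.

Lemma frac_valueV f u : frac_value f u -> u != 0 -> frac_value f^-1 u^-1.
Proof.
case=> p [q] [q0 -> e] u0; exists q, p; split.
- by rewrite e mulf_neq0.
- by rewrite invf_div.
- by rewrite e mulrA mulVf ?mul1r.
Qed.

Lemma rec_pair_value_fixed_point a b x y a' b' w :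
  frac_value a a' -> frac_value b b' -> frac_value x w -> frac_value y w ->
  w != 0 -> a' * w + w + b' = w * w ->
  forall n,
  frac_value (rec_pair a b x y n).1 w /\ frac_value (rec_pair a b x y n).2 w.
Proof.
move=> va vb vx vy w0 fix_w; elim=> [|n [v1 v2]] //=; split=> //.
have := frac_valueM (frac_valueD (frac_valueD (frac_valueM va v1) v2) vb)
                    (frac_valueV v1 w0).
by rewrite fix_w mulfK.
Qed.

End Specialization.

Lemma exists_fixed_point_neq0 (K : closedFieldType) (a b : K) : b != 0 ->
  exists2 w, w != 0 & a * w + w + b = w * w.
Proof.
move=> b0; have [w] := @solve_monicpoly _ 2 (nth 0 [:: b; a + 1]) isT.
rewrite !big_ord_recl big_ord0 /= expr0 expr1 mulr1 addr0 expr2 => fix_w.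
exists w; last by rewrite fix_w; ring.
by apply: contraNneq b0 => w0; move: fix_w; rewrite w0 !mulr0 !addr0 => <-.
Qed.

Inductive pexpr :=
  | PA | PX | PY | PNat of nat
  | PAdd of pexpr & pexpr | PMul of pexpr & pexpr | POpp of pexpr.

Fixpoint pexpr_eval (T : ringType) (a x y : T) (e : pexpr) : T :=
  match e with
  | PA => a | PX => x | PY => y | PNat n => n%:R
  | PAdd e1 e2 => pexpr_eval a x y e1 + pexpr_eval a x y e2
  | PMul e1 e2 => pexpr_eval a x y e1 * pexpr_eval a x y e2
  | POpp e1 => - pexpr_eval a x y e1
  end.

Lemma pexpr_eval_rmorph (S T : ringType) (f : {rmorphism S -> T}) a x y e :
  f (pexpr_eval a x y e) = pexpr_eval (f a) (f x) (f y) e.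
Proof.
by elim: e => //= [n|e1 IH1 e2 IH2|e1 IH1 e2 IH2|e IH];
  rewrite ?rmorph_nat ?rmorphD ?rmorphM ?rmorphN ?IH1 ?IH2 ?IH.
Qed.

(* [(u, v)] stands for the Gaussian integer [u + v i]; [PA] is sent to [i]. *)
Fixpoint pexpr_gauss (x0 y0 : int) (e : pexpr) : int * int :=
  match e with
  | PA => (0, 1) | PX => (x0, 0) | PY => (y0, 0) | PNat n => (n%:Z, 0)
  | PAdd e1 e2 => let: (u1, v1) := pexpr_gauss x0 y0 e1 in
                  let: (u2, v2) := pexpr_gauss x0 y0 e2 in (u1 + u2, v1 + v2)
  | PMul e1 e2 => let: (u1, v1) := pexpr_gauss x0 y0 e1 in
                  let: (u2, v2) := pexpr_gauss x0 y0 e2 in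
                  (u1 * u2 - v1 * v2, u1 * v2 + v1 * u2)
  | POpp e1 => let: (u1, v1) := pexpr_gauss x0 y0 e1 in (- u1, - v1)
  end.

Lemma pexpr_eval_gauss (K : comRingType) (a : K) x0 y0 e : a ^+ 2 = -1 ->
  pexpr_eval a x0%:~R y0%:~R e =
  (pexpr_gauss x0 y0 e).1%:~R + (pexpr_gauss x0 y0 e).2%:~R * a.
Proof.
move=> a_sqr; elim: e => /= [| | |n|e1 IH1 e2 IH2|e1 IH1 e2 IH2|e IH];
  rewrite ?IH ?IH1 ?IH2 ?mul0r ?addr0 ?mul1r ?add0r //.
- by case: (pexpr_gauss _ _ e1) => u1 v1; case: (pexpr_gauss _ _ e2) => u2 v2;
     rewrite /= !intrD; ring.
- by case: (pexpr_gauss _ _ e1) => u1 v1; case: (pexpr_gauss _ _ e2) => u2 v2;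
     rewrite /= !(intrD, intrM, intrN); ring: a_sqr.
- by case: (pexpr_gauss _ _ e) => u v; rewrite /= !intrN; ring.
Qed.

Lemma gauss_neq0 (K : numDomainType) (a : K) (u v : int) : a ^+ 2 = -1 ->
  (u, v) != (0, 0) -> u%:~R + v%:~R * a != 0.
Proof.
move=> a_sqr; apply: contra_neq => uva0.
have : (u ^+ 2 + v ^+ 2)%:~R = (u%:~R + v%:~R * a) * (u%:~R - v%:~R * a) :> K.
  by rewrite intrD !rmorphXn; ring: a_sqr.
rewrite uva0 mul0r => /eqP; rewrite intr_eq0 paddr_eq0 ?sqr_ge0 // !sqrf_eq0.
by case/andP=> /eqP-> /eqP->.
Qed.

Section Period8.
Variables (F : fieldType) (a x y : F).
Hypothesis a_sqr : a ^+ 2 = -1.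
(* (3, 5) is just a point at which none of the denominators produced by
   [field] below vanishes. *)
Hypothesis xy_generic :
  forall e, pexpr_gauss 3 5 e != (0, 0) -> pexpr_eval a x y e != 0.

Ltac reify_pexpr t :=
  lazymatch t with
  | a => constr:(PA) | x => constr:(PX) | y => constr:(PY)
  | ?u + ?v =>
      let e1 := reify_pexpr u in let e2 := reify_pexpr v in constr:(PAdd e1 e2)
  | ?u * ?v =>
      let e1 := reify_pexpr u in let e2 := reify_pexpr v in constr:(PMul e1 e2)
  | - ?u => let e := reify_pexpr u in constr:(POpp e)
  | 0 => constr:(PNat 0)
  | 1 => constr:(PNat 1)
  | ?n%:R => constr:(PNat n)
  end.

Ltac generic_neq0 :=
  lazymatch goal with
  | |- is_true (?t != 0) =>
      let e := reify_pexpr t in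
      change (pexpr_eval a x y e != 0); apply: xy_generic;
      vm_compute; reflexivity
  end.

Lemma rec_pair8 : rec_pair a ((1 - a) / 2) x y 8 = (x, y).
Proof.
rewrite /=; congr pair; field: a_sqr;
  by repeat (apply/andP; split); generic_neq0.
Qed.

End Period8.

HB.instance Definition _ (R : rcfType) :=
  GRing.RMorphism.copy (@constF R) (@tofrac _ \o polyC \o polyC).

Section RationalFunctions.
Variable R : rcfType.
Local Notation C := R[i].

Definition eval2 (x0 y0 : C) : {rmorphism {poly {poly C}} -> C} :=
  horner_eval x0 \o horner_eval y0%:P.

Lemma eval2E x0 y0 p : eval2 x0 y0 p = p.[y0%:P].[x0].
Proof. by []. Qed.

Lemma frac_value_constF x0 y0 c : frac_value (eval2 x0 y0) (constF c) c.
Proof.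
by have := frac_value_tofrac (eval2 x0 y0) c%:P%:P; rewrite eval2E !hornerC.
Qed.

Lemma frac_value_z1 x0 y0 : frac_value (eval2 x0 y0) (ind_z1 R) x0.
Proof.
have := frac_value_tofrac (eval2 x0 y0) 'X%:P.
by rewrite eval2E hornerC hornerX.
Qed.

Lemma frac_value_z2 x0 y0 : frac_value (eval2 x0 y0) (ind_z2 R) y0.
Proof.
by have := frac_value_tofrac (eval2 x0 y0) 'X; rewrite eval2E hornerX hornerC.
Qed.

Lemma ratfun2_generic (a : C) : a ^+ 2 = -1 ->
  forall e, pexpr_gauss 3 5 e != (0, 0) ->
  pexpr_eval (constF a) (ind_z1 R) (ind_z2 R) e != 0.
Proof.
move=> a_sqr e e_nz; rewrite /constF /ind_z1 /ind_z2 -pexpr_eval_rmorph.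
apply: (@tofrac_neq0 _ _ (eval2 3%:~R 5%:~R)).
rewrite pexpr_eval_rmorph !eval2E !(hornerC, hornerX).
by rewrite pexpr_eval_gauss // gauss_neq0.
Qed.

Lemma rec_pair_ratfun2_neq0 (a b : C) : b != 0 ->
  forall n, (rec_pair (constF a) (constF b) (ind_z1 R) (ind_z2 R) n).1 != 0.
Proof.
move=> b0 n; have [w w0 fix_w] := exists_fixed_point_neq0 a b0.
have [vn _] := rec_pair_value_fixed_point
  (frac_value_constF w w a) (frac_value_constF w w b)
  (frac_value_z1 w w) (frac_value_z2 w w) w0 fix_w n.
exact: frac_value_neq0 vn w0.
Qed.

End RationalFunctions.

Theorem mainTheorem1 (R : rcfType) (a2 a0 : R[i]) :
  (a2 = 'i%C /\ a0 = (1 - 'i%C) / 2) \/ (a2 = - 'i%C /\ a0 = (1 + 'i%C) / 2) ->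
  periodic_rec (constF a2) (constF a0) (ind_z1 R) (ind_z2 R) 8 /\
  (forall n, (1 <= n)%N ->
     rec_seq (constF a2) (constF a0) (ind_z1 R) (ind_z2 R) (n + 8) =
     rec_seq (constF a2) (constF a0) (ind_z1 R) (ind_z2 R) n).
Proof.
move=> a_cases.
have [a2_sqr a0E] : a2 ^+ 2 = -1 /\ a0 = (1 - a2) / 2.
  by case: a_cases => -[-> ->]; rewrite ?sqrrN sqr_i ?opprK.
have a0_neq0 : a0 != 0.
  rewrite a0E mulf_neq0 ?invr_eq0 ?pnatr_eq0 // subr_eq0.
  apply: contra_eq_neq a2_sqr => <-.
  by rewrite expr1n -subr_eq0 opprK -mulr2n pnatr_eq0.
have period8 : rec_pair (constF a2) (constF a0) (ind_z1 R) (ind_z2 R) 8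
               = (ind_z1 R, ind_z2 R).
  rewrite a0E fmorph_div rmorphB rmorph1 rmorph_nat.
  apply: rec_pair8; first by rewrite -rmorphXn a2_sqr rmorphN1.
  exact: ratfun2_generic.
have periodic := rec_seq_periodic period8.
split=> //; split; first by move=> n _; exact: rec_pair_ratfun2_neq0.
by split; [exact: (periodic 1%N) | exact: (periodic 2%N)].
Qed.
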